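(* The formal power series $\mathcal{E}_1(x)=\sum_{n=1}^{\infty}e(n)x^n\in\mathbb{Z}[[x]]$ satisfies $$\mathcal{E}_1(x)=\mathcal{E}_1(x^2)+\frac{x^2+1}{x}\,\mathcal{E}_1(x^4)+\frac{x^2}{1-x}.$$
   Context: The Stern polynomials $B_n(t)\in\mathbb{Z}[t]$ are defined by $B_0(t)=0$, $B_1(t)=1$, and for $n\geq 1$: $B_{2n}(t)=tB_n(t)$, $B_{2n+1}(t)=B_n(t)+B_{n+1}(t)$. For $n\geq1$ let $e(n)=\deg B_n(t)$. *)

From HB Require Import structures.
From mathcomp Require Import all_boot all_order all_algebra.
Set Implicit Arguments. Unset Strict Implicit. Unset Printing Implicit Defensive.
Import GRing.Theory Num.Theory.
Local Open Scope ring_scope.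

(* Stern polynomials B_n(t) in Z[t], computed with fuel (fuel n suffices). *)
Fixpoint sternF (fuel n : nat) : {poly int} :=
  match fuel with
  | 0 => 0
  | f.+1 =>
    if n is 0 then 0 else
    if n == 1%N then 1 else
    if odd n then sternF f n./2 + sternF f (n./2).+1
    else 'X * sternF f n./2
  end.

Definition stern (n : nat) : {poly int} := sternF n.+1 n.

Definition e (n : nat) : nat := (size (stern n)).-1.

Definition fps := nat -> int.

Definition fps_add (f g : fps) : fps := fun n => f n + g n.
Definition fps_mul (f g : fps) : fps :=
  fun n => \sum_(i < n.+1) f i * g (n - i)%N.
(* f(x^k), k > 0 *)
Definition fps_subst_pow (k : nat) (f : fps) : fps :=
  fun n => if (k %| n)%N then f (n %/ k)%N else 0.
(* f / x, meaningful when f has zero constant term *)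
Definition fps_divX (f : fps) : fps := fun n => f n.+1.
Definition fps_X2p1 : fps := fun n => ((n == 0%N) || (n == 2%N))%:R.
Definition fps_X2 : fps := fun n => (n == 2%N)%:R.
Definition fps_1mX : fps := fun n => (n == 0%N)%:R - (n == 1%N)%:R.
Definition fps_inv1mX : fps := fun _ => 1.
Definition fps_one : fps := fun n => (n == 0%N)%:R.

Definition E1 : fps := fun n => if n is 0 then 0 else (e n)%:Z.

Lemma fps_inv1mX_spec n : fps_mul fps_1mX fps_inv1mX n = fps_one n.
Proof.
rewrite /fps_mul /fps_1mX /fps_inv1mX /fps_one.
case: n => [|n]; first by rewrite big_ord_recl big_ord0 /= mulr1 subr0 addr0.
rewrite !big_ord_recl /= big1 => [|i _]; first by rewrite !mulr1 sub0r subr0 addr0 addrN.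
by rewrite /bump /= subrr mul0r.
Qed.

From mathcomp Require Import all_boot all_order all_algebra zify.
Import GRing.Theory Num.Theory Order.TTheory.

(* Because the Stern polynomials have nonnegative coefficients, no cancellation
   occurs in B_(2n+1) = B_n + B_(n+1), so e(2n) = e(n) + 1 and
   e(2n+1) = max(e(n), e(n+1)).  By induction consecutive values of e differ by
   at most one, which collapses the maxima in e(4k+1) and e(4k+3) to
   e(k) + 1 and e(k+1) + 1.  Comparing the coefficients of x^n for each residue
   of n modulo 4, these four recursions are exactly the functional equation. *)

Lemma size_polyD_nneg (R : numDomainType) (p q : {poly R}) :
  (forall i, 0 <= p`_i)%R -> (forall i, 0 <= q`_i)%R ->
  size (p + q)%R = maxn (size p) (size q).
Proof.
wlog le_qp : p q / size q <= size p => [hwlog p_ge0 q_ge0|p_ge0 q_ge0].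
  have /orP[le_qp|le_pq] := leq_total (size q) (size p); first exact: hwlog.
  by rewrite addrC maxnC hwlog.
rewrite (maxn_idPl le_qp); apply/anti_leq.
rewrite (leq_trans (size_polyD p q)) ?(maxn_idPl le_qp) //=.
have [->|p_neq0] := eqVneq p 0%R; first by rewrite size_poly0.
have lead_gt0 : (0 < lead_coef p)%R by rewrite lt0r lead_coef_eq0 p_neq0 p_ge0.
rewrite (polySpred p_neq0) ltnNge; apply/negP => /leq_sizeP/(_ _ (leqnn _)).
by rewrite coefD -lead_coefE => /eqP; rewrite gt_eqF // ltr_pwDl.
Qed.

Lemma sternF_fuel_irrelevant f g n : n < f -> n < g -> sternF f n = sternF g n.
Proof.
elim: f g n => [|f IH] [|g] n //= lt_nf lt_ng.
case: n lt_nf lt_ng => [|n] //= lt_nf lt_ng; case: eqP => // n_neq0.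
rewrite uphalf_half; have := odd_double_half n; case: (odd n) => /= def_n.
  by rewrite (IH g) //; lia.
by rewrite !(IH g) //; lia.
Qed.

Lemma stern_fuel f n : n < f -> sternF f n = stern n.
Proof. by move=> lt_nf; apply: sternF_fuel_irrelevant. Qed.

Lemma stern0 : stern 0 = 0%R. Proof. by []. Qed.

Lemma stern1 : stern 1 = 1%R. Proof. by []. Qed.

Lemma stern_rec n : 1 < n ->
  stern n = if odd n then (stern n./2 + stern n./2.+1)%R else ('X * stern n./2)%R.
Proof.
case: n => [|[|n]] // _.
have -> : stern n.+2 = if odd n.+2 then (sternF n.+2 n.+2./2 + sternF n.+2 n.+2./2.+1)%R
                       else ('X * sternF n.+2 n.+2./2)%R by [].
rewrite [odd n.+2]/= negbK; case: (odd n) (odd_double_half n) => n_eq;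
  by rewrite !stern_fuel //; lia.
Qed.

Lemma stern_double m : stern m.*2 = ('X * stern m)%R.
Proof.
case: m => [|m]; first by rewrite mulr0.
by rewrite stern_rec ?odd_double ?doubleK // doubleS.
Qed.

Lemma stern_doubleS m : stern m.*2.+1 = (stern m + stern m.+1)%R.
Proof.
case: m => [|m]; first by rewrite add0r.
by rewrite stern_rec /= ?odd_double ?uphalf_double // doubleS.
Qed.

Lemma pos_half_ind (P : nat -> Prop) :
  P 1 ->
  (forall m, 0 < m -> P m -> P m.*2) ->
  (forall m, 0 < m -> P m -> P m.+1 -> P m.*2.+1) ->
  forall n, 0 < n -> P n.
Proof.
move=> P1 Pdouble PdoubleS n; elim/ltn_ind: n => n IHn n_gt0.
have := odd_double_half n; case: (odd n) => /= n_eq; rewrite -n_eq.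
  have [->|m_gt0] := posnP n./2; first exact: P1.
  by apply: PdoubleS => //; apply: IHn; lia.
by apply: Pdouble; [lia | apply: IHn; lia].
Qed.

Lemma stern_coef_ge0_neq0 n : 0 < n ->
  (forall i, 0 <= (stern n)`_i)%R /\ stern n != 0%R.
Proof.
move: n; apply: pos_half_ind => [|m _ [ge0 neq0]|m _ [ge0 neq0] [ge0' neq0']].
- by rewrite stern1; split=> [i|]; rewrite ?coef1 ?oner_neq0 //; case: (i == 0%N).
- rewrite stern_double mulf_neq0 ?polyX_eq0 //; split=> // -[|i]; rewrite coefXM //=.
- rewrite stern_doubleS -size_poly_gt0 size_polyD_nneg //.
  rewrite leq_max size_poly_gt0 neq0.
  by split=> // i; rewrite coefD addr_ge0.
Qed.

Lemma stern_coef_ge0 n i : (0 <= (stern n)`_i)%R.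
Proof.
have [->|/stern_coef_ge0_neq0[]//] := posnP n.
by rewrite stern0 coef0.
Qed.

Lemma size_stern n : 0 < n -> size (stern n) = (e n).+1.
Proof.
by move=> /stern_coef_ge0_neq0[_ neq0]; rewrite prednK // size_poly_gt0.
Qed.

Lemma e1 : e 1 = 0.
Proof. by rewrite /e stern1 size_poly1. Qed.

Lemma e_double m : 0 < m -> e m.*2 = (e m).+1.
Proof.
by move=> m_gt0; rewrite /e stern_double mulrC size_mulX -?size_poly_gt0 size_stern.
Qed.

Lemma e_doubleS m : 0 < m -> e m.*2.+1 = maxn (e m) (e m.+1).
Proof.
move=> m_gt0; rewrite /e stern_doubleS.
have [ge0 ge0'] := (stern_coef_ge0 m, stern_coef_ge0 m.+1).
by rewrite size_polyD_nneg // !size_stern // maxnSS.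
Qed.

Lemma e_succ_bounds n : 0 < n -> e n.+1 <= (e n).+1 /\ e n <= (e n.+1).+1.
Proof.
move: n; apply: pos_half_ind => [|m m_gt0 [le1 le2]|m m_gt0 [le1 le2] _].
- by rewrite -[2]/1.*2 e_double // e1.
- rewrite e_doubleS // e_double //; lia.
- rewrite -doubleS e_double // e_doubleS //; lia.
Qed.

Lemma e_4k k : 0 < k -> e (k * 4) = (e (k * 2)).+1.
Proof.
by move=> k_gt0; rewrite (_ : k * 4 = (k * 2).*2) ?e_double ?muln_gt0 //; lia.
Qed.

Lemma e_4k1 k : 0 < k -> e (k * 4 + 1) = (e k).+1.
Proof.
move=> k_gt0; have [le1 _] := e_succ_bounds _ k_gt0.
rewrite (_ : k * 4 + 1 = k.*2.*2.+1); last by lia.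
rewrite e_doubleS ?double_gt0 // e_double // e_doubleS //; lia.
Qed.

Lemma e_4k2 k : e (k * 4 + 2) = (e (k * 2 + 1)).+1.
Proof. by rewrite (_ : k * 4 + 2 = (k * 2 + 1).*2) ?e_double ?addn1 //; lia. Qed.

Lemma e_4k3 k : e (k * 4 + 3) = (e k.+1).+1.
Proof.
rewrite (_ : k * 4 + 3 = k.*2.+1.*2.+1); last by lia.
rewrite e_doubleS // -doubleS e_double //.
have [->|k_gt0] := posnP k; first by rewrite e1.
have [_ le2] := e_succ_bounds _ k_gt0.
rewrite e_doubleS //; lia.
Qed.

Lemma E1E n : E1 n = (e n)%:Z%R.
Proof. by case: n => //; rewrite /e stern0 size_poly0. Qed.

Lemma fps_mul_X2p1E (g : fps) n :
  fps_mul fps_X2p1 g n = (g n + if (1 < n)%N then g (n - 2)%N else 0)%R.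
Proof.
rewrite /fps_mul /fps_X2p1; case: n => [|[|n]].
- by rewrite big_ord1 mul1r addr0.
- by rewrite !big_ord_recl big_ord0 /= mul1r mul0r !addr0.
rewrite !big_ord_recl /= !mul1r mul0r add0r subn0 subn2 big1 ?addr0 //.
by move=> i _; rewrite mul0r.
Qed.

Lemma fps_mul_X2_inv1mXE n : fps_mul fps_X2 fps_inv1mX n = ((1 < n)%N%:R)%R.
Proof.
rewrite /fps_mul /fps_X2; case: n => [|[|n]].
- by rewrite big_ord1 mul0r.
- by rewrite !big_ord_recl big_ord0 /= !mul0r !addr0.
by rewrite !big_ord_recl /= !mul0r !add0r mul1r big1 ?addr0.
Qed.

Lemma fps_subst_powE d q r (f : fps) n : n = q * d + r -> r < d ->
  fps_subst_pow d f n = if r == 0 then f q else 0%R.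
Proof.
move=> -> lt_rd; have d_gt0 : 0 < d by apply: leq_ltn_trans lt_rd.
by rewrite /fps_subst_pow /dvdn modnMDl modn_small // divnMDl // divn_small ?addn0.
Qed.

Theorem mainTheorem17 : forall n : nat,
  E1 n =
  fps_add (fps_add (fps_subst_pow 2 E1)
                   (fps_mul fps_X2p1 (fps_divX (fps_subst_pow 4 E1))))
          (fps_mul fps_X2 fps_inv1mX) n.
Proof.
move=> n; rewrite /fps_add fps_mul_X2p1E fps_mul_X2_inv1mXE /fps_divX.
have [n_le1|n_gt1] := leqP n 1.
  by case: n n_le1 => [|[|]] //; rewrite E1E e1.
rewrite (divn_eq n 4) in n_gt1 *.
move: (n %/ 4) (ltn_pmod n (isT : 0 < 4)) n_gt1 => k.
case: (n %% 4) => [|[|[|[|]]]] // _ n_gt1.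
- rewrite (fps_subst_powE 2 (k * 2) 0) 1?(fps_subst_powE 4 k 1)
    1?(fps_subst_powE 4 k.-1 3) /= ?E1E ?addn0 ?e_4k; lia.
- rewrite (fps_subst_powE 2 (k * 2) 1) 1?(fps_subst_powE 4 k 2)
    1?(fps_subst_powE 4 k 0) /= ?E1E ?e_4k1; lia.
- rewrite (fps_subst_powE 2 (k * 2 + 1) 0) 1?(fps_subst_powE 4 k 3)
    1?(fps_subst_powE 4 k 1) /= ?E1E ?e_4k2; lia.
- rewrite (fps_subst_powE 2 (k * 2 + 1) 1) 1?(fps_subst_powE 4 k.+1 0)
    1?(fps_subst_powE 4 k 2) /= ?E1E ?e_4k3; lia.
Qed.
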